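(* The $\mathbf k$-linear map $\varphi:\mathrm{WCQSym}\to\mathrm{QSym}$, defined by $\varphi(M_\alpha)=(-1)^{\ell_\varepsilon(\alpha)}M_{\bar\alpha}$ if $\alpha\in\mathcal C_N$ and $\varphi(M_\alpha)=0$ if $\alpha\in\mathcal C_\varepsilon$, is an algebra homomorphism.
   Context: $\tilde{\mathbb N}=\mathbb N\cup\{\varepsilon\}$ with $0+\varepsilon=\varepsilon+\varepsilon=\varepsilon$ and $n+\varepsilon=n$ for integers $n\ge1$. $\mathbf{k}$ is a commutative ring containing $\mathbb Q$; $\mathbf{k}[[X]]_{\tilde{\mathbb N}}$, $X=\{x_1<x_2<\cdots\}$, is the algebra of possibly infinite linear combinations of formal monomials $\prod x_i^{f(x_i)}$ with $f$ finitely supported $\tilde{\mathbb N}$-valued, multiplied by adding exponents in $\tilde{\mathbb N}$. An $\tilde{\mathbb N}$-composition is a finite (possibly empty) sequence of elements of $\{\varepsilon,1,2,\dots\}$; $M_{(\alpha_1,\dots,\alpha_k)}=\sum_{1\le i_1<\cdots<i_k}x_{i_1}^{\alpha_1}\cdots x_{i_k}^{\alpha_k}$, $M_\emptyset=1$. $\mathrm{WCQSym}$ is the $\mathbf k$-span of all $M_\alpha$ (a subalgebra with the $M_\alpha$ as basis), and $\mathrm{QSym}$ the span of those with all entries positive integers. $\ell_\varepsilon(\alpha)$ is the number of entries equal to $\varepsilon$, $\bar\alpha$ is $\alpha$ with its $\varepsilon$ entries deleted. $\mathcal C_\varepsilon$ is the set of $\tilde{\mathbb N}$-compositions whose first entry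 is $\varepsilon$, $\mathcal C_N$ the set of all others (including the empty one). *)

From mathcomp Require Import all_boot all_algebra.
Set Implicit Arguments. Unset Strict Implicit. Unset Printing Implicit Defensive.
Import GRing.Theory.
Local Open Scope ring_scope.

(* Ñ = N ∪ {ε}:  None = ε,  Some n = the integer n. *)
Definition tN := option nat.

Definition tadd (a b : tN) : tN :=
  match a, b with
  | Some m, Some n => Some (m + n)%N
  | None, None => None
  | Some 0, None | None, Some 0 => None
  | Some n, None | None, Some n => Some n
  end.

(* A monomial prod_i x_i^{f(x_i)} is represented by the finite sequence
   [f(x_1); ...; f(x_n)] of exponents (trailing Some 0 entries are
   irrelevant; all series used below are invariant under them). *)
Definition monomial := seq tN.

Definition series (k : Type) := monomial -> k.

Definition tbound (e : tN) : nat := if e is Some n then n else 0%N.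
Definition tcands (e : tN) : seq tN := None :: [seq Some i | i <- iota 0 (tbound e).+1].
Definition splits (e : tN) : seq (tN * tN) :=
  [seq p <- [seq (a, b) | a <- tcands e, b <- tcands e] | tadd p.1 p.2 == e].

Fixpoint decomps (m : monomial) : seq (monomial * monomial) :=
  match m with
  | [::] => [:: ([::], [::])]
  | e :: m' => [seq (p.1 :: q.1, p.2 :: q.2) | p <- splits e, q <- decomps m']
  end.

Definition smul (k : comRingType) (F G : series k) : series k :=
  fun m => \sum_(q <- decomps m) F q.1 * G q.2.

(* Ñ-compositions: finite sequences with entries in {ε,1,2,...} *)
Definition wcomp (a : seq tN) : bool := all (fun e => e != Some 0%N) a.

Definition compress (m : monomial) : seq tN := [seq e <- m | e != Some 0%N].

Definition M (k : comRingType) (alpha : seq tN) : series k :=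
  fun m => (compress m == alpha)%:R.

Definition Msum (k : comRingType) (l : seq (seq tN * k)) : series k :=
  fun m => \sum_(p <- l) p.2 * M k p.1 m.

Definition ell_eps (a : seq tN) : nat := count (fun e => e == None) a.
Definition bar (a : seq tN) : seq tN := [seq e <- a | e != None].
Definition in_Ceps (a : seq tN) : bool := if a is None :: _ then true else false.

Definition phi (k : comRingType) (l : seq (seq tN * k)) : seq (seq tN * k) :=
  [seq (bar p.1, (-1) ^+ ell_eps p.1 * p.2) | p <- l & ~~ in_Ceps p.1].

From mathcomp Require Import all_boot all_algebra.
From mathcomp Require Import ring.
From Stdlib Require Import FunctionalExtensionality.
Set Implicit Arguments. Unset Strict Implicit. Unset Printing Implicit Defensive.
Import GRing.Theory.
Local Open Scope ring_scope.

(* M_a M_b is the sum of the M_d over the quasi-shuffles d of a and b (colliding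
   letters are added in Ñ), and the M_d with d a weak composition are linearly
   independent, so it suffices to check phi on products of two M's. Erasing the
   ε-letters maps the quasi-shuffles of a and b onto those of bar a and bar b;
   the surplus ones cancel in pairs, since merging an ε into a neighbouring
   letter y (ε + y = y) removes one ε and so flips the sign. *)

Lemma tadd0l y : tadd (Some 0%N) y = y.
Proof. by case: y => [[|n]|]. Qed.

Lemma tadd0r x : tadd x (Some 0%N) = x.
Proof. by case: x => [[|n]|] //=; rewrite addn0. Qed.

Lemma taddC : commutative tadd.
Proof. by case=> [[|i]|]; case=> [[|j]|] //=; rewrite addnC. Qed.

Lemma tadd_neq0 x y : x != Some 0%N -> y != Some 0%N -> tadd x y != Some 0%N.
Proof. by case: x => [[|n]|]; case: y => [[|m]|]. Qed.

Lemma tadd_some n m : tadd (Some n) (Some m) = Some (n + m)%N.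
Proof. by case: n. Qed.

Lemma tadd_eps_l n : Some n != Some 0%N -> tadd None (Some n) = Some n.
Proof. by case: n. Qed.

Lemma tadd_eps_r n : Some n != Some 0%N -> tadd (Some n) None = Some n.
Proof. by case: n. Qed.

Lemma mem_tcands_tadd u v : u \in tcands (tadd u v).
Proof.
case: u => [i|]; last exact: mem_head.
rewrite inE (mem_map (@Some_inj _)) mem_iota add0n ltnS.
by case: v => [j|]; case: i => [|i] //=; rewrite ?leq_addr.
Qed.

Lemma uniq_tcands e : uniq (tcands e).
Proof.
rewrite cons_uniq (map_inj_uniq (@Some_inj _)) iota_uniq andbT.
by apply/mapP => -[].
Qed.

Lemma uniq_splits e : uniq (splits e).
Proof. by rewrite filter_uniq // allpairs_uniq ?uniq_tcands // => -[? ?] [? ?]. Qed.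

Lemma mem_splits e u v : ((u, v) \in splits e) = (tadd u v == e).
Proof.
rewrite mem_filter; case: eqP => [<-|] //; rewrite andTb.
by apply: (allpairs_f pair); last rewrite taddC; exact: mem_tcands_tadd.
Qed.

Fixpoint qshuffle (a b : seq tN) {struct a} : seq (seq tN) :=
  match a with
  | [::] => [:: b]
  | x :: a' => let fix qshuffle_a (b : seq tN) : seq (seq tN) :=
       match b with
       | [::] => [:: a]
       | y :: b' => [seq x :: d | d <- qshuffle a' b] ++ [seq y :: d | d <- qshuffle_a b']
                    ++ [seq tadd x y :: d | d <- qshuffle a' b']
       end in qshuffle_a b
  end.

Lemma qshuffle0r a : qshuffle a [::] = [:: a]. Proof. by case: a. Qed.

Lemma qshuffle_cons x a y b : qshuffle (x :: a) (y :: b) =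
  [seq x :: d | d <- qshuffle a (y :: b)] ++ [seq y :: d | d <- qshuffle (x :: a) b]
  ++ [seq tadd x y :: d | d <- qshuffle a b].
Proof. by []. Qed.

Lemma all_wcomp_qshuffle a b : wcomp a -> wcomp b -> all wcomp (qshuffle a b).
Proof.
elim: a b => [|x a IHa] b; first by rewrite /= andbT.
elim: b => [|y b IHb]; first by rewrite qshuffle0r /= andbT.
move=> wxa wyb; move: (wxa) (wyb) => /andP[x0 wa] /andP[y0 wb].
rewrite qshuffle_cons !all_cat !all_map; apply/and3P; split; apply/allP => d hd.
- by rewrite /= x0 (allP (IHa _ wa wyb)).
- by rewrite /= y0 (allP (IHb wxa wb)).
- by rewrite /= tadd_neq0 // (allP (IHa _ wa wb)).
Qed.

Lemma bar_some n a : bar (Some n :: a) = Some n :: bar a.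
Proof. by []. Qed.

Lemma bar_eps a : bar (None :: a) = bar a.
Proof. by []. Qed.

Lemma wcomp_bar a : wcomp a -> wcomp (bar a).
Proof. by rewrite /wcomp all_filter => /sub_all; apply=> x /= ->; rewrite implybT. Qed.

Lemma M_wcomp (k : comNzRingType) a d : wcomp d -> M k a d = (d == a)%:R.
Proof. by rewrite /M /compress => /all_filterP ->. Qed.

Section Product.
Variable k : comNzRingType.

Lemma big_eq_indicator_uniq (T : eqType) (s : seq T) a (g : T -> k) : uniq s ->
  \sum_(d <- s) (d == a)%:R * g d = (a \in s)%:R * g a.
Proof.
move=> us; have [sa|sa] := boolP (a \in s).
  rewrite (big_rem a) //= eqxx big1_seq ?addr0 // => d /andP[_ hd].
  by rewrite (negbTE (memPn _ _ hd)) ?mul0r // mem_rem_uniqF.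
by rewrite mul0r big1_seq // => d /andP[_ hd]; rewrite (negbTE (memPn sa _ hd)) mul0r.
Qed.

Lemma big_qshuffle_cons x a y b (f : seq tN -> k) :
  \sum_(d <- qshuffle (x :: a) (y :: b)) f d =
  \sum_(d <- qshuffle a (y :: b)) f (x :: d) + \sum_(d <- qshuffle (x :: a) b) f (y :: d)
  + \sum_(d <- qshuffle a b) f (tadd x y :: d).
Proof. by rewrite qshuffle_cons !big_cat !big_map; exact: addrA. Qed.

Lemma sum_splits_indicator u v e :
  \sum_(p <- splits e) ((p.1 == u)%:R * (p.2 == v)%:R : k) = (tadd u v == e)%:R.
Proof.
transitivity (\sum_(p <- splits e) ((p == (u, v))%:R * 1 : k)).
  by apply: eq_bigr => -[a b] _; rewrite xpair_eqE mulr1 -natrM mulnb.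
by rewrite big_eq_indicator_uniq ?uniq_splits // mem_splits mulr1.
Qed.

Lemma big_mulrDD (I : Type) (r : seq I) (a b c d : k) (A A' B B' : I -> k) :
  \sum_(i <- r) (a * A i + b * A' i) * (c * B i + d * B' i) =
  a * c * \sum_(i <- r) A i * B i + a * d * \sum_(i <- r) A i * B' i +
  b * c * \sum_(i <- r) A' i * B i + b * d * \sum_(i <- r) A' i * B' i.
Proof. by rewrite !mulr_sumr -!big_split /=; apply: eq_bigr => i _; ring. Qed.

Lemma smul_cons (F F0 F1 G G0 G1 : series k) x y e m :
  (forall u c, F (u :: c) = (u == Some 0%N)%:R * F0 c + (u == x)%:R * F1 c) ->
  (forall u c, G (u :: c) = (u == Some 0%N)%:R * G0 c + (u == y)%:R * G1 c) ->
  smul F G (e :: m) =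
    (Some 0%N == e)%:R * smul F0 G0 m + (y == e)%:R * smul F0 G1 m +
    (x == e)%:R * smul F1 G0 m + (tadd x y == e)%:R * smul F1 G1 m.
Proof.
move=> Fcons Gcons; rewrite /smul /= big_allpairs_dep /=.
under eq_bigr => p _ do under eq_bigr => q _ do rewrite Fcons Gcons.
under eq_bigr => p _ do rewrite big_mulrDD.
by rewrite !big_split -!mulr_suml !sum_splits_indicator !tadd0l !tadd0r.
Qed.

Definition Mtail (a : seq tN) : series k :=
  if a is _ :: a' then M k a' else fun _ => 0.

Lemma smul0l (G : series k) m : smul (fun _ => 0) G m = 0.
Proof. by rewrite /smul big1 // => q _; rewrite mul0r. Qed.

Lemma smul0r (F : series k) m : smul F (fun _ => 0) m = 0.
Proof. by rewrite /smul big1 // => q _; rewrite mulr0. Qed.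

Lemma M_cons_neq0 a e m : e != Some 0%N ->
  M k a (e :: m) = (e == head None a)%:R * Mtail a m.
Proof.
rewrite /M /= => /negbTE ->.
by case: a => [|x a] /=; rewrite ?mulr0 // eqseq_cons -mulnb natrM.
Qed.

Lemma head_neq0 a : wcomp a -> head None a != Some 0%N.
Proof. by case: a => [|x a] // /andP[]. Qed.

Lemma M_cons a : wcomp a -> forall u m,
  M k a (u :: m) = (u == Some 0%N)%:R * M k a m + (u == head None a)%:R * Mtail a m.
Proof.
move=> /head_neq0 a0 u m.
have [->|u0] := eqVneq u (Some 0%N); last by rewrite M_cons_neq0 // mul0r add0r.
by rewrite mul1r eq_sym (negbTE a0) mul0r addr0.
Qed.

Lemma smul_M a b m : wcomp a -> wcomp b ->
  smul (M k a) (M k b) m = \sum_(d <- qshuffle a b) M k d m.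
Proof.
elim: m a b => [|e m IHm] a b wa wb.
  rewrite /smul /= big_seq1 /M /=.
  case: a wa => [|x a] wa; case: b wb => [|y b] wb.
  - by rewrite big_seq1 mulr1.
  - by rewrite big_seq1 mul1r.
  - by rewrite qshuffle0r big_seq1 mulr1.
  - by rewrite big_qshuffle_cons !big1 ?mul0r ?addr0.
rewrite (smul_cons _ _ (M_cons wa) (M_cons wb)) IHm //.
have [->|e0] := eqVneq e (Some 0%N).
  rewrite mul1r (negbTE (head_neq0 wa)) (negbTE (head_neq0 wb)).
  by rewrite (negbTE (tadd_neq0 (head_neq0 wa) (head_neq0 wb))) !mul0r !addr0.
rewrite mul0r add0r.
under [RHS]eq_bigr => d _ do rewrite M_cons_neq0 //.
case: a wa => [|x a] wa; case: b wb => [|y b] wb;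
  rewrite ?qshuffle0r ?big_seq1 ?big_qshuffle_cons; cbn [head Mtail];
  rewrite ?smul0l ?smul0r ?mulr0 ?add0r ?addr0.
- by [].
- by case/andP: wb => _ wb; rewrite IHm // big_seq1 eq_sym.
- by case/andP: wa => _ wa; rewrite IHm // qshuffle0r big_seq1 eq_sym.
case/andP: (wa) => _ wa'; case/andP: (wb) => _ wb'.
rewrite !IHm // -!mulr_sumr !(eq_sym e); congr (_ + _); exact: addrC.
Qed.

End Product.

Section Sign.
Variable k : comNzRingType.

Definition eps_sign (a : seq tN) : k := (-1) ^+ ell_eps a.

Lemma eps_sign_nil : eps_sign [::] = 1.
Proof. exact: expr0. Qed.

Lemma eps_sign_eps a : eps_sign (None :: a) = - eps_sign a.
Proof. by rewrite /eps_sign /= exprS mulN1r. Qed.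

Lemma eps_sign_some n a : eps_sign (Some n :: a) = eps_sign a.
Proof. by []. Qed.

Lemma big_eps_sign_some n L (f : seq tN -> k) :
  \sum_(d <- L) eps_sign (Some n :: d) * f (bar (Some n :: d)) =
  \sum_(d <- L) eps_sign d * (fun d => f (Some n :: d)) (bar d).
Proof. by []. Qed.

Lemma big_eps_sign_eps L (f : seq tN -> k) :
  \sum_(d <- L) eps_sign (None :: d) * f (bar (None :: d)) =
  - \sum_(d <- L) eps_sign d * f (bar d).
Proof. by rewrite -sumrN; apply: eq_bigr => d _; rewrite eps_sign_eps mulNr. Qed.

Lemma sum_qshuffle_eps_sign a b (f : seq tN -> k) : wcomp a -> wcomp b ->
  \sum_(d <- qshuffle a b) eps_sign d * f (bar d) =
  eps_sign a * eps_sign b * \sum_(d <- qshuffle (bar a) (bar b)) f d.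
Proof.
elim: a b f => [|x a IHa] b f.
  by move=> _ _; rewrite !big_seq1 eps_sign_nil mul1r.
elim: b f => [|y b IHb] f; first by move=> _ _; rewrite !qshuffle0r !big_seq1 eps_sign_nil mulr1.
move=> wxa wyb; move: (wxa) (wyb) => /andP[x0 wa] /andP[y0 wb].
have IH1 f' := IHa (y :: b) f' wa wyb; have IH2 f' := IHb f' wxa wb.
have IH3 f' := IHa b f' wa wb.
rewrite big_qshuffle_cons.
case: x x0 {wxa IHa IHb} IH1 IH2 IH3 => [n|] x0 IH1 IH2 IH3;
  case: y y0 {wyb} IH1 IH2 IH3 => [m|] y0 IH1 IH2 IH3.
- rewrite tadd_some !big_eps_sign_some (IH1 (fun d => f (Some n :: d)))
    (IH2 (fun d => f (Some m :: d))) (IH3 (fun d => f (Some (n + m)%N :: d))).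
  by rewrite !bar_some big_qshuffle_cons tadd_some !eps_sign_some; ring.
- rewrite tadd_eps_r // !big_eps_sign_some big_eps_sign_eps
    (IH1 (fun d => f (Some n :: d))) IH2 (IH3 (fun d => f (Some n :: d))).
  rewrite bar_some bar_eps !eps_sign_eps; ring.
- rewrite tadd_eps_l // !big_eps_sign_some big_eps_sign_eps IH1
    (IH2 (fun d => f (Some m :: d))) (IH3 (fun d => f (Some m :: d))).
  rewrite bar_some bar_eps !eps_sign_eps; ring.
- rewrite [tadd _ _]/= !big_eps_sign_eps IH1 IH2 IH3 !bar_eps !eps_sign_eps; ring.
Qed.

Definition phi_weight (a : seq tN) : k := (~~ in_Ceps a)%:R * eps_sign a.

Lemma phi_weight_nil : phi_weight [::] = 1.
Proof. by rewrite /phi_weight eps_sign_nil mulr1. Qed.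

Lemma phi_weight_some n a : phi_weight (Some n :: a) = eps_sign a.
Proof. exact: mul1r. Qed.

Lemma phi_weight_eps a : phi_weight (None :: a) = 0.
Proof. exact: mul0r. Qed.

Lemma big_phi_weight_some n L (f : seq tN -> k) :
  \sum_(d <- L) phi_weight (Some n :: d) * f (bar (Some n :: d)) =
  \sum_(d <- L) eps_sign d * (fun d => f (Some n :: d)) (bar d).
Proof. by apply: eq_bigr => d _; rewrite phi_weight_some. Qed.

Lemma big_phi_weight_eps L (f : seq tN -> k) :
  \sum_(d <- L) phi_weight (None :: d) * f (bar (None :: d)) = 0.
Proof. by rewrite big1 // => d _; rewrite phi_weight_eps mul0r. Qed.

(* For a in C_ε and b in C_N the surviving quasi-shuffles start with the first
   letter y of b; those where the leading ε of a is merged into y cancel those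
   where it is kept behind y. *)
Lemma sum_qshuffle_phi_weight a b (f : seq tN -> k) : wcomp a -> wcomp b ->
  \sum_(d <- qshuffle a b) phi_weight d * f (bar d) =
  phi_weight a * phi_weight b * \sum_(d <- qshuffle (bar a) (bar b)) f d.
Proof.
case: a => [|x a]; first by move=> _ _; rewrite !big_seq1 phi_weight_nil mul1r.
case: b => [|y b]; first by move=> _ _; rewrite !qshuffle0r !big_seq1 phi_weight_nil mulr1.
move=> wxa wyb; move: (wxa) (wyb) => /andP[x0 wa] /andP[y0 wb].
case: x x0 wxa => [n|] x0 wxa; case: y y0 wyb => [m|] y0 wyb.
- rewrite !phi_weight_some -(sum_qshuffle_eps_sign f wxa wyb) !big_qshuffle_cons tadd_some.
  by congr (_ + _ + _); apply: eq_bigr => d _; rewrite phi_weight_some.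
- rewrite big_qshuffle_cons tadd_eps_r // big_phi_weight_eps addr0 !big_phi_weight_some.
  rewrite !(sum_qshuffle_eps_sign (fun d => f (Some n :: d))) // eps_sign_eps phi_weight_eps.
  by rewrite bar_eps mulrN mulNr addNr mulr0 mul0r.
- rewrite big_qshuffle_cons tadd_eps_l // big_phi_weight_eps add0r !big_phi_weight_some.
  rewrite !(sum_qshuffle_eps_sign (fun d => f (Some m :: d))) // eps_sign_eps phi_weight_eps.
  by rewrite bar_eps !mulNr addNr !mul0r.
- by rewrite big_qshuffle_cons !big_phi_weight_eps phi_weight_eps !mul0r !addr0.
Qed.

End Sign.

Arguments eps_sign {k} a.
Arguments phi_weight {k} a.

Section Coefficients.
Variable k : comNzRingType.

Definition pairing (U : seq (seq tN)) (g : seq tN -> k) (F : series k) : k :=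
  \sum_(d <- U) F d * g d.

Lemma eq_pairing U g (F G : series k) : F =1 G -> pairing U g F = pairing U g G.
Proof. by move=> FG; apply: eq_bigr => d _; rewrite FG. Qed.

Lemma pairing_sum (I : Type) (r : seq I) (F : I -> series k) U g :
  pairing U g (fun m => \sum_(i <- r) F i m) = \sum_(i <- r) pairing U g (F i).
Proof. by rewrite /pairing; under eq_bigr do rewrite mulr_suml; rewrite exchange_big. Qed.

Lemma pairing_scale c (F : series k) U g :
  pairing U g (fun m => c * F m) = c * pairing U g F.
Proof. by rewrite /pairing mulr_sumr; apply: eq_bigr => d _; rewrite mulrA. Qed.

Section Universe.
Variables (U : seq (seq tN)) (g : seq tN -> k).
Hypotheses (uniqU : uniq U) (wcompU : all wcomp U).

Lemma pairing_M a : a \in U -> pairing U g (M k a) = g a.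
Proof.
move=> aU; rewrite /pairing.
under eq_big_seq => d dU do rewrite M_wcomp ?(allP wcompU d dU) //.
by rewrite big_eq_indicator_uniq // aU mul1r.
Qed.

Lemma pairing_Msum l : {subset map fst l <= U} ->
  pairing U g (Msum l) = \sum_(p <- l) p.2 * g p.1.
Proof.
move=> lU; rewrite (pairing_sum l (fun p m => p.2 * M k p.1 m)).
by apply: eq_big_seq => p pl; rewrite pairing_scale pairing_M // lU // map_f.
Qed.

Lemma pairing_smul_M a b : wcomp a -> wcomp b -> {subset qshuffle a b <= U} ->
  pairing U g (smul (M k a) (M k b)) = \sum_(d <- qshuffle a b) g d.
Proof.
move=> wa wb abU; rewrite (eq_pairing _ _ (fun m => smul_M k m wa wb)) pairing_sum.
by apply: eq_big_seq => d dab; rewrite pairing_M // abU.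
Qed.

End Universe.

Lemma smul_Msum (l1 l2 : seq (seq tN * k)) m :
  smul (Msum l1) (Msum l2) m =
  \sum_(p1 <- l1) p1.2 * \sum_(p2 <- l2) p2.2 * smul (M k p1.1) (M k p2.1) m.
Proof.
rewrite /smul; under eq_bigr do rewrite big_distrlr /=.
rewrite exchange_big; apply: eq_bigr => p1 _.
rewrite exchange_big mulr_sumr; apply: eq_bigr => p2 _.
by rewrite !mulr_sumr; apply: eq_bigr => q _; ring.
Qed.

(* The M_d with d a weak composition are linearly independent: pairing against
   any g over a finite set U of weak compositions reads off their coefficients. *)
Lemma coef_smul_Msum (l1 l2 l3 : seq (seq tN * k)) (g : seq tN -> k) :
  all (fun p => wcomp p.1) l1 -> all (fun p => wcomp p.1) l2 ->
  all (fun p => wcomp p.1) l3 -> Msum l3 = smul (Msum l1) (Msum l2) ->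
  \sum_(p <- l3) p.2 * g p.1 =
  \sum_(p1 <- l1) p1.2 * \sum_(p2 <- l2) p2.2 * \sum_(d <- qshuffle p1.1 p2.1) g d.
Proof.
move=> w1 w2 w3 l3E.
pose Q := flatten [seq qshuffle p1.1 p2.1 | p1 <- l1, p2 <- l2].
pose U := undup (map fst l3 ++ Q).
have uniqU : uniq U := undup_uniq _.
have l3U : {subset map fst l3 <= U} by move=> d; rewrite mem_undup mem_cat => ->.
have QU p1 p2 : p1 \in l1 -> p2 \in l2 -> {subset qshuffle p1.1 p2.1 <= U}.
  move=> p1l1 p2l2 d dQ; rewrite mem_undup mem_cat; apply/orP; right.
  by apply/flattenP; exists (qshuffle p1.1 p2.1); first exact: allpairs_f.
have wcompU : all wcomp U.
  apply/allP => d; rewrite mem_undup mem_cat.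
  case/orP => [/mapP[p pl3 ->]|/flattenP[s /allpairsP[[p1 p2] [p1l1 p2l2 ->]]]].
    exact: (allP w3).
  by apply/allP; apply: all_wcomp_qshuffle; [exact: (allP w1) | exact: (allP w2)].
rewrite -(pairing_Msum g uniqU wcompU l3U) l3E (eq_pairing _ _ (smul_Msum l1 l2)).
rewrite pairing_sum; apply: eq_big_seq => p1 p1l1.
rewrite pairing_scale pairing_sum; congr (_ * _); apply: eq_big_seq => p2 p2l2.
by rewrite pairing_scale
  (pairing_smul_M g uniqU wcompU (allP w1 _ p1l1) (allP w2 _ p2l2) (QU _ _ p1l1 p2l2)).
Qed.

Lemma big_phi (l : seq (seq tN * k)) (F : seq tN * k -> k) :
  \sum_(q <- phi l) F q = \sum_(p <- l) (~~ in_Ceps p.1)%:R * F (bar p.1, eps_sign p.1 * p.2).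
Proof.
rewrite big_map big_filter big_mkcond; apply: eq_bigr => p _.
by case: ifP; rewrite ?mul1r ?mul0r.
Qed.

Lemma Msum_phi (l : seq (seq tN * k)) m :
  Msum (phi l) m = \sum_(p <- l) p.2 * (phi_weight p.1 * M k (bar p.1) m).
Proof. by rewrite /Msum big_phi; apply: eq_bigr => p _; rewrite /phi_weight /=; ring. Qed.

End Coefficients.

Theorem lemma3p6 (k : comUnitRingType)
    (hQ : forall n : nat, (n.+1)%:R \is a @GRing.unit k) :
  Msum (phi [:: ([::], 1 : k)]) = Msum [:: ([::], 1 : k)] /\
  (forall l1 l2 l3 : seq (seq tN * k),
    all (fun p => wcomp p.1) l1 -> all (fun p => wcomp p.1) l2 ->
    all (fun p => wcomp p.1) l3 ->
    Msum l3 = smul (Msum l1) (Msum l2) ->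
    Msum (phi l3) = smul (Msum (phi l1)) (Msum (phi l2))).
Proof.
split; first by rewrite /phi /= expr0 mul1r.
move=> l1 l2 l3 w1 w2 w3 l3E; apply: functional_extensionality => m.
rewrite Msum_phi (coef_smul_Msum (fun d => phi_weight d * M k (bar d) m) w1 w2 w3 l3E).
rewrite smul_Msum big_phi; apply: eq_big_seq => p1 p1l1.
rewrite big_phi !mulr_sumr; apply: eq_big_seq => p2 p2l2.
have [wp1 wp2] := (allP w1 _ p1l1, allP w2 _ p2l2).
rewrite (sum_qshuffle_phi_weight (fun d => M k d m) wp1 wp2) smul_M ?wcomp_bar //=.
by rewrite /phi_weight; ring.
Qed.
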